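(* Fix $(\hat\imath,\hat\jmath)\in\mathcal E$ and let $B_1$, $B^n_1$ be the associated matrices (which are invertible). For every probability vector $p\in\mathbb R^I$ with positive entries, $$\vartheta_p=-\frac{\langle e,B_1^{-1}h\rangle}{\langle e,B_1^{-1}p\rangle},\qquad \vartheta^n_p=-\frac{\langle e,(B^n_1)^{-1}h^n\rangle}{\langle e,(B^n_1)^{-1}p\rangle}\quad\text{for every }n.$$
   Context: Network and parameters: $\mathcal I=\{1,\dots,I\}$, $\mathcal J=\{1,\dots,J\}$, edges $\mathcal E\subset\mathcal I\times\mathcal J$ with the bipartite graph $\mathcal G=(\mathcal I\cup\mathcal J,\mathcal E)$ a tree; $i\sim j$ iff $(i,j)\in\mathcal E$, $\mathcal J(i)=\{j:i\sim j\}$, $\mathcal I(j)=\{i:i\sim j\}$; $\mathbb R^{\mathcal G}$ denotes arrays in $\mathbb R^{I\times J}$ vanishing off $\mathcal E$, $\mathbb R^{\mathcal G}_+$ those with nonnegative entries. For each $n\in\mathbb N$: $\lambda^n_i>0$, $\mu^n_{ij}>0$, $N^n_j\in\mathbb N$ with $\lambda^n_i/n\to\lambda_i>0$, $N^n_j/n\to\nu_j>0$, $\mu^n_{ij}\to\mu_{ij}>0$, $\hat\lambda^n_i:=(\lambda^n_i-n\lambda_i)/\sqrt n\to\hat\lambda_i$, $\hat\mu^n_{ij}:=\sqrt n(\mu^n_{ij}-\mu_{ij})\to\hat\mu_{ij}$, $\hat\nu^n_j:=\sqrt n(N^n_j/n-\nu_j)\to\hat\nu_j$. Complete resource pooling: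 the LP ''minimize $\max_j\sum_i\xi_{ij}$ over $\xi\in\mathbb R^{\mathcal G}_+$ subject to $\sum_j\mu_{ij}\nu_j\xi_{ij}=\lambda_i$ $\forall i$'' has a unique solution $\xi^*$, with $\sum_i\xi^*_{ij}=1$ $\forall j$ and $\xi^*_{ij}>0$ for $i\sim j$; $z^*_{ij}:=\xi^*_{ij}\nu_j$. Let $\theta_j:=\hat\nu_j+\sum_{i\in\mathcal I(j)}(\hat\mu_{ij}/\mu_{ij})z^*_{ij}$ and $\theta^n_j:=\hat\nu^n_j+\sum_{i\in\mathcal I(j)}(\hat\mu^n_{ij}/\mu^n_{ij})z^*_{ij}$. SWSS: for a probability vector $p$ with positive entries, $\vartheta_p$ is the (unique) optimal value of: maximize $\vartheta$ over $(\vartheta,\kappa)\in\mathbb R\times\mathbb R^{\mathcal G}$ subject to $\hat\lambda_i\le\sum_{j\in\mathcal J(i)}\mu_{ij}\kappa_{ij}-\vartheta p_i$ $\forall i$ and $\sum_{i\in\mathcal I(j)}\kappa_{ij}=\theta_j$ $\forall j$; $\vartheta^n_p$ is the optimal value of the same program with $\hat\lambda_i,\mu_{ij},\theta_j$ replaced by $\hat\lambda^n_i,\mu^n_{ij},\theta^n_j$. Drift data: $h_i:=\hat\lambda_i-\sum_{j\in\mathcal J(i)}(\mu_{ij}\xi^*_{ij}\hat\nu_j+\hat\mu_{ij}z^*_{ij})$ and $h^n_i:=n^{-1/2}\big(\lambda^n_i-\sum_{j\in\mathcal J(i)}\mu^n_{ij}\xi^*_{ij}N^n_j\big)$. Let $\mathcal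 D=\{(\alpha,\beta)\in\mathbb R^I\times\mathbb R^J:\sum_i\alpha_i=\sum_j\beta_j\}$ and $\Psi:\mathcal D\to\mathbb R^{\mathcal G}$ the unique linear map with $\sum_j\Psi_{ij}(\alpha,\beta)=\alpha_i$, $\sum_i\Psi_{ij}(\alpha,\beta)=\beta_j$. For $(\hat\imath,\hat\jmath)\in\mathcal E$, $B_1\in\mathbb R^{I\times I}$, $B_2\in\mathbb R^{I\times J}$ are the unique matrices with column $\hat\jmath$ of $B_2$ zero and $\sum_{j\in\mathcal J(i)}\mu_{ij}\Psi_{ij}(\alpha,\beta)=(B_1\alpha+B_2\beta)_i$ for all $i$ and $(\alpha,\beta)\in\mathcal D$; $B^n_1,B^n_2$ are defined the same way with $\mu^n_{ij}$ in place of $\mu_{ij}$. $e$ is the all-ones vector. *)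

From HB Require Import structures.
From mathcomp Require Import all_boot all_order all_algebra.
From mathcomp Require Import all_classical all_reals all_analysis.
Set Implicit Arguments. Unset Strict Implicit. Unset Printing Implicit Defensive.
Import Order.TTheory GRing.Theory Num.Theory.
Import numFieldNormedType.Exports.
Local Open Scope ring_scope.

Section Network.
Variables (I J : nat).

Definition badj (E : {set 'I_I * 'I_J}) : rel ('I_I + 'I_J)%type :=
  fun u v => match u, v with
  | inl i, inr j => (i, j) \in E
  | inr j, inl i => (i, j) \in E
  | _, _ => false
  end.

(** A tree: connected, and every edge is a bridge (removing it disconnects
    its endpoints), i.e. connected and acyclic. *)
Definition is_tree (E : {set 'I_I * 'I_J}) : Prop :=
  (forall u v, connect (badj E) u v) /\
  (forall i j, (i, j) \in E -> ~~ connect (badj (E :\ (i, j))) (inl i) (inr j)).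

(** Arrays in R^G : vanishing off E. *)
Definition inRG (R : ringType) (E : {set 'I_I * 'I_J}) (x : 'M[R]_(I, J)) : Prop :=
  forall i j, (i, j) \notin E -> x i j = 0.

(** max_j a_j <= max_j b_j *)
Definition le_max (R : realDomainType) (a b : 'I_J -> R) : Prop :=
  exists j, forall j', a j' <= b j.

Variable R : realType.

Definition crp_feasible (E : {set 'I_I * 'I_J}) (lam : 'I_I -> R) (mu : 'M[R]_(I, J))
  (nu : 'I_J -> R) (xi : 'M[R]_(I, J)) : Prop :=
  inRG E xi /\ (forall i j, 0 <= xi i j) /\
  (forall i, \sum_(j | (i, j) \in E) mu i j * nu j * xi i j = lam i).

Definition colsum (xi : 'M[R]_(I, J)) : 'I_J -> R := fun j => \sum_i xi i j.

Definition crp_optimal E lam mu nu (xi : 'M[R]_(I, J)) : Prop :=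
  crp_feasible E lam mu nu xi /\
  forall zeta, crp_feasible E lam mu nu zeta -> le_max (colsum xi) (colsum zeta).

Definition crp_unique_solution E lam mu nu (xi : 'M[R]_(I, J)) : Prop :=
  crp_optimal E lam mu nu xi /\
  forall zeta, crp_optimal E lam mu nu zeta -> zeta = xi.

Definition swss_feasible (E : {set 'I_I * 'I_J}) (hlam : 'I_I -> R)
  (mu : 'M[R]_(I, J)) (theta : 'I_J -> R) (p : 'I_I -> R)
  (v : R) (kappa : 'M[R]_(I, J)) : Prop :=
  inRG E kappa /\
  (forall i, hlam i <= \sum_(j | (i, j) \in E) mu i j * kappa i j - v * p i) /\
  (forall j, \sum_(i | (i, j) \in E) kappa i j = theta j).

Definition swss_value E hlam mu theta p (v : R) : Prop :=
  (exists kappa, swss_feasible E hlam mu theta p v kappa) /\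
  (forall v' kappa, swss_feasible E hlam mu theta p v' kappa -> v' <= v).

(** Psi(alpha, beta): any array psi in R^G with row sums alpha and column
    sums beta (it is unique since G is a tree). *)
Definition is_Psi (E : {set 'I_I * 'I_J}) (alpha : 'I_I -> R) (beta : 'I_J -> R)
  (psi : 'M[R]_(I, J)) : Prop :=
  inRG E psi /\ (forall i, \sum_j psi i j = alpha i) /\
  (forall j, \sum_i psi i j = beta j).

Definition is_B_matrices (E : {set 'I_I * 'I_J}) (jh : 'I_J) (mu : 'M[R]_(I, J))
  (B1 : 'M[R]_I) (B2 : 'M[R]_(I, J)) : Prop :=
  (forall i, B2 i jh = 0) /\
  forall (alpha : 'I_I -> R) (beta : 'I_J -> R) (psi : 'M[R]_(I, J)),
    \sum_i alpha i = \sum_j beta j -> is_Psi E alpha beta psi ->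
    forall i, \sum_j mu i j * psi i j =
              \sum_k B1 i k * alpha k + \sum_j B2 i j * beta j.

Definition e_dot_inv (B : 'M[R]_I) (v : 'I_I -> R) : R :=
  \sum_i (invmx B *m \col_k v k) i ord0.

Definition swss_formula (B : 'M[R]_I) (h p : 'I_I -> R) : R :=
  - (e_dot_inv B h / e_dot_inv B p).

End Network.

(* Everything happens on the bipartite graph G = (I u J, E), and the only
   property of the tree that is used is its connectedness: a property that is
   transported along every edge holds at every vertex once it holds at jh.

   In a connected graph every divergence with zero total mass is
      realised by an array supported on E; in particular, for every alpha
      with sum 0 there is psi in R^G with row sums alpha and column sums 0.
   2. The matrices B1, B2.  Testing the defining identity on the unit flow
      along an edge (i,j) gives  (k == i) mu_ij = B1_ki + B2_kj.  Hence for
      every row vector y, y_i mu_ij = (y B1)_i + (y B2)_j on edges, while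
      (y B2)_jh = 0.  Propagating from jh yields that B1 is invertible and
      that w := e' B1^-1 satisfies w_i mu_ij = 1 + (w B2)_j > 0.
   3. Duality.  Weighting the i-th SWSS constraint by w_i and exchanging
      the sums turns sum_i w_i (sum_j mu_ij kappa_ij) into a quantity that
      only depends on the column sums theta; this bounds vartheta by
      -<w,h>/<w,p>, and solving B1 alpha = h + vartheta p with a flow from
      step 1 shows that the bound is attained.
   4. The theorem: for the limit data and for every n > 0 we exhibit an
      explicit routing whose service rates are hlam - h (resp. its n-th
      analogue), and step 3 applies to both. *)

From HB Require Import structures.
From mathcomp Require Import all_boot all_order all_algebra.
From mathcomp Require Import all_classical all_reals all_analysis.
From mathcomp Require Import ring lra.
Set Implicit Arguments. Unset Strict Implicit. Unset Printing Implicit Defensive.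
Import Order.TTheory GRing.Theory Num.Theory.
Import numFieldNormedType.Exports.
Local Open Scope classical_set_scope.
Local Open Scope ring_scope.

Lemma sum_mul_indicator (R : pzRingType) (T : finType) (F : T -> R) (t : T) :
  \sum_k F k * (k == t)%:R = F t.
Proof.
rewrite (bigD1 t) //= eqxx mulr1 big1 ?addr0 // => k /negbTE ->.
by rewrite mulr0.
Qed.

Lemma sum_indicator (R : pzRingType) (T : finType) (t : T) :
  \sum_k (k == t)%:R = 1 :> R.
Proof.
have := sum_mul_indicator (fun _ => 1 : R) t.
by under eq_bigr do rewrite mul1r.
Qed.

Section TreeFlows.
Variables (R : nzRingType) (I J : nat) (E : {set 'I_I * 'I_J}).

Lemma sum_row_edges (i : 'I_I) (F : 'I_J -> R) :
  (forall j, (i, j) \notin E -> F j = 0) -> \sum_(j | (i, j) \in E) F j = \sum_j F j.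
Proof.
move=> F0; rewrite big_mkcond; apply: eq_bigr => j _.
by case: ifP => // /negbT /F0 ->.
Qed.

Lemma sum_col_edges (j : 'I_J) (F : 'I_I -> R) :
  (forall i, (i, j) \notin E -> F i = 0) -> \sum_(i | (i, j) \in E) F i = \sum_i F i.
Proof.
move=> F0; rewrite big_mkcond; apply: eq_bigr => i _.
by case: ifP => // /negbT /F0 ->.
Qed.

Lemma delta_inRG (i : 'I_I) (j : 'I_J) :
  (i, j) \in E -> inRG E (delta_mx i j : 'M[R]_(I, J)).
Proof.
move=> ijE a b abE; rewrite mxE; case: eqP => [ai|] //; case: eqP => [bj|] //=.
by rewrite ai bj ijE in abE.
Qed.

Lemma row_sum_delta (i : 'I_I) (j : 'I_J) (k : 'I_I) :
  \sum_l (delta_mx i j : 'M[R]_(I, J)) k l = (k == i)%:R.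
Proof.
rewrite (eq_bigr (fun l => (k == i)%:R * (l == j)%:R)) ?sum_mul_indicator //.
by move=> l _; rewrite mxE; case: (k == i); case: (l == j); rewrite /= ?mulr1 ?mulr0.
Qed.

Lemma col_sum_delta (i : 'I_I) (j : 'I_J) (l : 'I_J) :
  \sum_k (delta_mx i j : 'M[R]_(I, J)) k l = (l == j)%:R.
Proof.
rewrite (eq_bigr (fun k => (l == j)%:R * (k == i)%:R)) ?sum_mul_indicator //.
by move=> k _; rewrite mxE; case: (k == i); case: (l == j); rewrite /= ?mulr1 ?mulr0.
Qed.

Definition outflow (psi : 'M[R]_(I, J)) (x : 'I_I + 'I_J) : R :=
  match x with inl i => \sum_j psi i j | inr j => - \sum_i psi i j end.

Lemma outflowD (phi psi : 'M[R]_(I, J)) x :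
  outflow (phi + psi) x = outflow phi x + outflow psi x.
Proof.
case: x => x /=; rewrite -?opprD -big_split /=.
  by apply: eq_bigr => j _; rewrite mxE.
by congr (- _); apply: eq_bigr => i _; rewrite mxE.
Qed.

Lemma edge_unit_flow x y : badj E x y ->
  exists phi : 'M[R]_(I, J), inRG E phi /\
    forall z, outflow phi z = (z == x)%:R - (z == y)%:R.
Proof.
case: x => [i|j]; case: y => [i'|j'] //= xyE.
- exists (delta_mx i j'); split; first exact: delta_inRG.
  by case=> z /=; rewrite ?row_sum_delta ?col_sum_delta ?subr0 ?sub0r.
- exists (- delta_mx i' j); split.
    by move=> a b abE; rewrite mxE (delta_inRG xyE) ?oppr0.
  case=> z /=.
    rewrite (eq_bigr (fun l => - (delta_mx i' j : 'M[R]_(I, J)) z l)); last first.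
      by move=> l _; rewrite mxE.
    by rewrite sumrN row_sum_delta sub0r.
  rewrite (eq_bigr (fun k => - (delta_mx i' j : 'M[R]_(I, J)) k z)); last first.
    by move=> k _; rewrite mxE.
  by rewrite sumrN opprK col_sum_delta subr0.
Qed.

Hypothesis connE : forall u v, connect (badj E) u v.

Lemma connected_propagate (P : 'I_I + 'I_J -> Prop) (jh : 'I_J) :
  (forall i j, (i, j) \in E -> (P (inl i) <-> P (inr j))) ->
  P (inr jh) -> forall v, P v.
Proof.
move=> Pedge Pjh v; have /connectP [s path_s ->] := connE (inr jh) v.
elim: s (inr jh) Pjh path_s => [|y s IH] x //= Px /andP [xy path_s].
apply: IH path_s; move: xy; case: x Px => [i|j]; case: y => [i'|j'] //= Px xyE.
- exact/(Pedge _ _ xyE).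
- exact/(Pedge _ _ xyE).
Qed.

Lemma unit_flow u v : exists psi : 'M[R]_(I, J), inRG E psi /\
  forall x, outflow psi x = (x == u)%:R - (x == v)%:R.
Proof.
have /connectP [s path_s ->] := connE u v.
elim: s u path_s => [|y s IH] x /=.
  move=> _; exists 0; split=> [i j _|z]; first by rewrite mxE.
  by rewrite subrr; case: z => z /=; rewrite big1 ?oppr0 // => *; rewrite mxE.
move=> /andP [xy /IH [psi [psiE psi_out]]].
have [phi [phiE phi_out]] := edge_unit_flow xy.
exists (phi + psi); split.
  by move=> a b abE; rewrite mxE phiE // psiE // addr0.
by move=> z; rewrite outflowD phi_out psi_out addrA subrK.
Qed.

Lemma flow_with_row_sums (ih : 'I_I) (alpha : 'I_I -> R) : \sum_i alpha i = 0 ->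
  exists psi : 'M[R]_(I, J), inRG E psi /\
    (forall i, \sum_j psi i j = alpha i) /\ (forall j, \sum_i psi i j = 0).
Proof.
move=> alpha0.
have /all_sig [f f_spec] := fun i => cid (unit_flow (inl i) (inl ih)).
have sum_entry a b : (\sum_i alpha i *: f i) a b = \sum_i alpha i * f i a b.
  by rewrite summxE; apply: eq_bigr => i _; rewrite mxE.
exists (\sum_i alpha i *: f i); split; last split.
- move=> a b abE; rewrite sum_entry big1 // => i _.
  by rewrite (proj1 (f_spec i)) // mulr0.
- move=> a; rewrite (eq_bigr _ (fun b _ => sum_entry a b)) exchange_big /=.
  rewrite (eq_bigr (fun i => alpha i * (i == a)%:R - alpha i * (a == ih)%:R)).
    by rewrite sumrB sum_mul_indicator -mulr_suml alpha0 mul0r subr0.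
  move=> i _; rewrite -mulr_sumr -mulrBr [i == a]eq_sym.
  by congr (_ * _); exact: (proj2 (f_spec i) (inl a)).
- move=> b; rewrite (eq_bigr _ (fun a _ => sum_entry a b)) exchange_big /=.
  rewrite big1 // => i _; rewrite -mulr_sumr.
  have := proj2 (f_spec i) (inr b); rewrite /= subrr => /eqP.
  by rewrite oppr_eq0 => /eqP ->; rewrite mulr0.
Qed.

End TreeFlows.

Definition einv (R : fieldType) (I : nat) (B : 'M[R]_I) (k : 'I_I) : R :=
  \sum_i invmx B i k.

Lemma e_dot_invE (R : realType) (I : nat) (B : 'M[R]_I) (v : 'I_I -> R) :
  e_dot_inv B v = \sum_k einv B k * v k.
Proof.
rewrite /e_dot_inv (eq_bigr (fun i => \sum_k invmx B i k * v k)); last first.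
  by move=> i _; rewrite mxE; apply: eq_bigr => k _; rewrite mxE.
by rewrite exchange_big /=; apply: eq_bigr => k _; rewrite mulr_suml.
Qed.

Section BMatrices.
Variables (R : realType) (I J : nat) (E : {set 'I_I * 'I_J}).
Hypothesis connE : forall u v, connect (badj E) u v.
Variables (mu : 'M[R]_(I, J)) (jh : 'I_J) (B1 : 'M[R]_I) (B2 : 'M[R]_(I, J)).
Hypothesis mu_pos : forall i j, (i, j) \in E -> 0 < mu i j.

Lemma weighted_exchange (y : 'I_I -> R) (g : 'I_J -> R) (kappa : 'M[R]_(I, J)) :
  (forall i j, (i, j) \in E -> y i * mu i j = g j) -> inRG E kappa ->
  \sum_i y i * \sum_(j | (i, j) \in E) mu i j * kappa i j =
  \sum_j g j * \sum_(i | (i, j) \in E) kappa i j.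
Proof.
move=> yg kappaE.
rewrite (eq_bigr (fun i => \sum_j g j * kappa i j)); last first.
  move=> i _; rewrite sum_row_edges => [|j ijE]; last by rewrite kappaE ?mulr0.
  rewrite mulr_sumr; apply: eq_bigr => j _.
  have [ijE|ijE] := boolP ((i, j) \in E); first by rewrite mulrA yg.
  by rewrite kappaE // !mulr0.
rewrite exchange_big /=; apply: eq_bigr => j _.
by rewrite sum_col_edges ?mulr_sumr // => i ijE; rewrite kappaE.
Qed.

Hypothesis HB : is_B_matrices E jh mu B1 B2.

(* The defining identity of (B1, B2), tested on the unit flow along (i,j). *)
Lemma B_edge i j : (i, j) \in E ->
  forall k, (k == i)%:R * mu i j = B1 k i + B2 k j.
Proof.
move=> ijE k.
have psi_delta : is_Psi E (fun k => (k == i)%:R) (fun l => (l == j)%:R)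
    (delta_mx i j : 'M[R]_(I, J)).
  by split; [exact: delta_inRG | split => *; rewrite ?row_sum_delta ?col_sum_delta].
have := proj2 HB _ _ _ (etrans (sum_indicator _ i) (esym (sum_indicator _ j)))
  psi_delta k.
rewrite (eq_bigr (fun l => mu k l * (k == i)%:R * (l == j)%:R)); last first.
  by move=> l _; rewrite mxE; case: (k == i); case: (l == j); rewrite /= ?mulr0 ?mulr1.
rewrite !sum_mul_indicator => <-.
by case: eqP => [->|]; rewrite ?mulr1 ?mulr0 ?mul0r ?mul1r.
Qed.

Definition Bcol (y : 'I_I -> R) (j : 'I_J) : R := \sum_k y k * B2 k j.

Lemma Bcol_hat (y : 'I_I -> R) : Bcol y jh = 0.
Proof. by rewrite /Bcol big1 // => k _; rewrite (proj1 HB) mulr0. Qed.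

Lemma Bcol_edge (y : 'I_I -> R) i j : (i, j) \in E ->
  y i * mu i j = \sum_k y k * B1 k i + Bcol y j.
Proof.
move=> ijE; rewrite -(sum_mul_indicator y i) mulr_suml /Bcol -big_split /=.
by apply: eq_bigr => k _; rewrite -mulrA B_edge // mulrDr.
Qed.

(* A row vector annihilated by B1 satisfies y i * mu i j = (y B2)_j on E;
   propagating y = 0 from (y B2)_jh = 0 shows that B1 is invertible. *)
Lemma B1_unit : B1 \in unitmx.
Proof.
rewrite -row_free_unit; apply: inj_row_free => v vB1.
pose y i := v ord0 i.
have yB1 l : \sum_k y k * B1 k l = 0.
  by have := congr1 (fun M : 'M[R]_(1, I) => M ord0 l) vB1; rewrite !mxE.
pose P x := match x with inl i => y i = 0 | inr j => Bcol y j = 0 end.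
have Pall : forall x, P x.
  apply: (connected_propagate connE (jh := jh)); last exact: Bcol_hat.
  move=> i j ijE /=; have := Bcol_edge y ijE; rewrite yB1 add0r => <-.
  split=> [->|/eqP]; first by rewrite mul0r.
  by rewrite mulf_eq0 (gt_eqF (mu_pos ijE)) orbF => /eqP.
by apply/rowP => i; rewrite mxE; exact: (Pall (inl i)).
Qed.

Notation w := (einv B1).

Lemma einv_B1 l : \sum_k w k * B1 k l = 1.
Proof.
rewrite (eq_bigr (fun k => \sum_i invmx B1 i k * B1 k l)); last first.
  by move=> k _; rewrite mulr_suml.
rewrite exchange_big /= (eq_bigr (fun i => (invmx B1 *m B1) i l)); last first.
  by move=> i _; rewrite mxE.
rewrite mulVmx ?B1_unit // (eq_bigr (fun i => (i == l)%:R)) ?sum_indicator //.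
by move=> i _; rewrite mxE.
Qed.

Lemma einv_edge i j : (i, j) \in E -> w i * mu i j = 1 + Bcol w j.
Proof. by move=> ijE; rewrite Bcol_edge // einv_B1. Qed.

(* Positivity of e' B1^-1 propagates from 1 + (w B2)_jh = 1 > 0. *)
Lemma einv_pos i : 0 < w i.
Proof.
pose P x := match x with inl i => 0 < w i | inr j => 0 < 1 + Bcol w j end.
apply: (connected_propagate connE (jh := jh) (P := P) _ _ (inl i)).
  move=> a b abE /=; rewrite -(einv_edge abE).
  by rewrite pmulr_lgt0 ?mu_pos.
by rewrite /P Bcol_hat addr0 ltr01.
Qed.

(* Solving B1 alpha = r with the flow of step 1: when <w, r> = 0 the
   solution alpha has total mass zero, so it is the row sum vector of some
   psi in R^G with zero column sums, and the mu-weighted row sums of psi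
   are B1 alpha = r. *)
Lemma B1_solve (ih : 'I_I) (r : 'I_I -> R) : \sum_k w k * r k = 0 ->
  exists psi : 'M[R]_(I, J), inRG E psi /\
    (forall i, \sum_j mu i j * psi i j = r i) /\ (forall j, \sum_i psi i j = 0).
Proof.
move=> wr0; pose alpha i := (invmx B1 *m \col_k r k) i ord0.
have alpha0 : \sum_i alpha i = 0 by move: wr0; rewrite -e_dot_invE.
have [psi [psiE [psi_row psi_col]]] := flow_with_row_sums connE ih alpha0.
exists psi; split=> //; split=> // i.
have psi_Psi : is_Psi E alpha (fun _ => 0) psi by [].
have mass : \sum_i alpha i = \sum_(j < J) 0 by rewrite alpha0 big1.
rewrite (proj2 HB _ _ _ mass psi_Psi) [X in _ + X]big1 => [|j _]; last by rewrite mulr0.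
rewrite addr0 -[RHS](_ : (B1 *m (invmx B1 *m \col_k r k)) i ord0 = r i).
  by rewrite mxE.
by rewrite mulmxA mulmxV ?B1_unit // mul1mx mxE.
Qed.

End BMatrices.

Definition routing (R : realType) (I J : nat) (E : {set 'I_I * 'I_J})
  (mu : 'M[R]_(I, J)) (theta : 'I_J -> R) (g : 'I_I -> R) (kappa : 'M[R]_(I, J)) :
  Prop :=
  inRG E kappa /\ (forall j, \sum_(i | (i, j) \in E) kappa i j = theta j) /\
  (forall i, \sum_(j | (i, j) \in E) mu i j * kappa i j = g i).

Section SWSSValue.
Variables (R : realType) (I J : nat) (E : {set 'I_I * 'I_J}).
Hypothesis connE : forall u v, connect (badj E) u v.
Variables (mu : 'M[R]_(I, J)) (jh : 'I_J) (B1 : 'M[R]_I) (B2 : 'M[R]_(I, J)).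
Hypothesis mu_pos : forall i j, (i, j) \in E -> 0 < mu i j.
Hypothesis HB : is_B_matrices E jh mu B1 B2.
Variables (ih : 'I_I) (hlam h p : 'I_I -> R) (theta : 'I_J -> R).
Hypothesis p_pos : forall i, 0 < p i.

(* The drift h is measured against a reference routing kappa0 serving at
   rate hlam - h. *)
Variable kappa0 : 'M[R]_(I, J).
Hypothesis kappa0_routing : routing E mu theta (fun i => hlam i - h i) kappa0.

Notation w := (einv B1).

Lemma weighted_service (kappa : 'M[R]_(I, J)) : inRG E kappa ->
  (forall j, \sum_(i | (i, j) \in E) kappa i j = theta j) ->
  \sum_i w i * \sum_(j | (i, j) \in E) mu i j * kappa i j =
  \sum_i w i * (hlam i - h i).
Proof.
have [k0E [k0_col k0_row]] := kappa0_routing.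
move=> kappaE kappa_col.
rewrite (weighted_exchange (einv_edge connE mu_pos HB) kappaE).
under [RHS]eq_bigr do rewrite -k0_row.
rewrite (weighted_exchange (einv_edge connE mu_pos HB) k0E).
by apply: eq_bigr => j _; rewrite kappa_col k0_col.
Qed.

Lemma einv_dot_p_pos : 0 < \sum_k w k * p k.
Proof.
rewrite (bigD1 ih) //= ltr_pwDl ?mulr_gt0 ?p_pos ?(einv_pos connE mu_pos HB) //.
by rewrite sumr_ge0 // => k _; rewrite mulr_ge0 ?ltW ?p_pos ?(einv_pos connE mu_pos HB).
Qed.

(* Weak duality: weighting the SWSS constraints by w > 0 bounds vartheta. *)
Lemma swss_upper (v : R) (kappa : 'M[R]_(I, J)) :
  swss_feasible E hlam mu theta p v kappa -> v <= swss_formula B1 h p.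
Proof.
move=> [kappaE [kappa_row kappa_col]].
have weighted : \sum_i w i * (hlam i + v * p i) <= \sum_i w i * (hlam i - h i).
  rewrite -(weighted_service kappaE kappa_col); apply: ler_sum => i _.
  by rewrite ler_pM2l ?(einv_pos connE mu_pos HB) //; have := kappa_row i; lra.
move: weighted; rewrite /swss_formula !e_dot_invE.
under eq_bigr do rewrite mulrDr mulrCA.
under [X in _ <= X]eq_bigr do rewrite mulrBr.
rewrite big_split sumrB -mulr_sumr lerD2l.
by rewrite -mulNr ler_pdivlMr ?einv_dot_p_pos //; lra.
Qed.

(* The bound is attained: the missing service h + vartheta p has zero
   w-mass, so step 1 provides a correction psi of kappa0. *)
Lemma swss_attained :
  exists kappa, swss_feasible E hlam mu theta p (swss_formula B1 h p) kappa.
Proof.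
have [k0E [k0_col k0_row]] := kappa0_routing.
set v := swss_formula B1 h p.
have mass0 : \sum_k w k * (h k + v * p k) = 0.
  under eq_bigr do rewrite mulrDr mulrCA.
  rewrite big_split /= -mulr_sumr /v /swss_formula !e_dot_invE mulNr divfK ?subrr //.
  exact: lt0r_neq0 einv_dot_p_pos.
have [psi [psiE [psi_row psi_col]]] := B1_solve connE mu_pos HB ih mass0.
exists (kappa0 + psi); split; last split.
- by move=> a b abE; rewrite mxE k0E // psiE // addr0.
- move=> i; under eq_bigr do rewrite mxE mulrDr.
  rewrite big_split /= k0_row sum_row_edges => [|j ijE]; last by rewrite psiE ?mulr0.
  by rewrite psi_row; lra.
- move=> j; under eq_bigr do rewrite mxE.
  rewrite big_split /= k0_col sum_col_edges => [|i ijE]; last by rewrite psiE.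
  by rewrite psi_col addr0.
Qed.

Lemma swss_formula_value : swss_value E hlam mu theta p (swss_formula B1 h p).
Proof. by split; [exact: swss_attained | exact: swss_upper]. Qed.

End SWSSValue.

Section Routings.
Variables (R : realType) (I J : nat) (E : {set 'I_I * 'I_J}).
Variables (xis : 'M[R]_(I, J)) (nu : 'I_J -> R).
Hypothesis xis_col : forall j, \sum_(i | (i, j) \in E) xis i j = 1.

Definition on_edges (F : 'I_I -> 'I_J -> R) : 'M[R]_(I, J) :=
  \matrix_(i, j) (if (i, j) \in E then F i j else 0).

Lemma on_edges_inRG F : inRG E (on_edges F).
Proof. by move=> i j ijE; rewrite mxE (negbTE ijE). Qed.

Lemma sum_col_on_edges F j :
  \sum_(i | (i, j) \in E) on_edges F i j = \sum_(i | (i, j) \in E) F i j.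
Proof. by apply: eq_bigr => i ijE; rewrite mxE ijE. Qed.

Lemma sum_row_on_edges (mu : 'M[R]_(I, J)) F i :
  \sum_(j | (i, j) \in E) mu i j * on_edges F i j =
  \sum_(j | (i, j) \in E) mu i j * F i j.
Proof. by apply: eq_bigr => j ijE; rewrite mxE ijE. Qed.

Lemma limit_routing (mu hmu : 'M[R]_(I, J)) (hnu : 'I_J -> R)
    (hlam h : 'I_I -> R) (theta : 'I_J -> R) :
  (forall i j, (i, j) \in E -> 0 < mu i j) ->
  (forall j, theta j =
     hnu j + \sum_(i | (i, j) \in E) (hmu i j / mu i j) * (xis i j * nu j)) ->
  (forall i, h i = hlam i - \sum_(j | (i, j) \in E)
     (mu i j * xis i j * hnu j + hmu i j * (xis i j * nu j))) ->
  exists kappa0, routing E mu theta (fun i => hlam i - h i) kappa0.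
Proof.
move=> mu_pos thetaE hE.
exists (on_edges (fun i j => xis i j * hnu j + hmu i j / mu i j * (xis i j * nu j))).
split; [exact: on_edges_inRG | split].
- move=> j; rewrite sum_col_on_edges big_split /= -mulr_suml xis_col mul1r.
  by rewrite thetaE.
- move=> i; rewrite sum_row_on_edges hE opprB addrC subrK.
  apply: eq_bigr => j ijE; field.
  by rewrite gt_eqF ?mu_pos.
Qed.

Lemma scaled_routing (m : nat) (lam lamm : 'I_I -> R) (mu mum : 'M[R]_(I, J))
    (N : 'I_J -> nat) (hlamm hm : 'I_I -> R) (thetam : 'I_J -> R) :
  (0 < m)%N -> (forall i j, (i, j) \in E -> 0 < mum i j) ->
  (forall i, \sum_(j | (i, j) \in E) mu i j * nu j * xis i j = lam i) ->
  (forall j, thetam j = Num.sqrt m%:R * ((N j)%:R / m%:R - nu j) +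
     \sum_(i | (i, j) \in E)
       (Num.sqrt m%:R * (mum i j - mu i j) / mum i j) * (xis i j * nu j)) ->
  (forall i, hlamm i = (lamm i - m%:R * lam i) / Num.sqrt m%:R) ->
  (forall i, hm i = (Num.sqrt m%:R)^-1 *
     (lamm i - \sum_(j | (i, j) \in E) mum i j * xis i j * (N j)%:R)) ->
  exists kappa, routing E mum thetam (fun i => hlamm i - hm i) kappa.
Proof.
move=> m0 mum_pos lamE thetaE hlamE hE.
set s := Num.sqrt (m%:R : R).
have s_pos : 0 < s by rewrite sqrtr_gt0 ltr0n.
have s2 : s * s = m%:R by rewrite -expr2 sqr_sqrtr // ler0n.
exists (on_edges (fun i j =>
  xis i j * ((N j)%:R - m%:R * mu i j * nu j / mum i j) / s)).
split; [exact: on_edges_inRG | split].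
- move=> j; rewrite sum_col_on_edges thetaE.
  rewrite (eq_bigr (fun i => xis i j * (s * ((N j)%:R / m%:R - nu j)) +
      s * (mum i j - mu i j) / mum i j * (xis i j * nu j))).
    by rewrite big_split /= -mulr_suml xis_col mul1r.
  move=> i ijE; rewrite -s2; field.
  by rewrite (gt_eqF s_pos) (gt_eqF (mum_pos _ _ ijE)).
- move=> i; rewrite sum_row_on_edges hlamE hE.
  rewrite (eq_bigr (fun j => mum i j * xis i j * (N j)%:R / s -
      m%:R / s * (mu i j * nu j * xis i j))).
    by rewrite sumrB -mulr_sumr lamE -mulr_suml -/s; field; rewrite gt_eqF.
  move=> j ijE; field.
  by rewrite (gt_eqF s_pos) (gt_eqF (mum_pos _ _ ijE)).
Qed.

End Routings.

Theorem theorem4 (R : realType) (I J : nat) (E : {set 'I_I * 'I_J})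
  (lamn : nat -> 'I_I -> R) (mun : nat -> 'M[R]_(I, J)) (Nn : nat -> 'I_J -> nat)
  (lam : 'I_I -> R) (mu : 'M[R]_(I, J)) (nu : 'I_J -> R)
  (hlam : 'I_I -> R) (hmu : 'M[R]_(I, J)) (hnu : 'I_J -> R)
  (xis : 'M[R]_(I, J)) (ih : 'I_I) (jh : 'I_J)
  (B1 : 'M[R]_I) (B2 : 'M[R]_(I, J))
  (B1n : nat -> 'M[R]_I) (B2n : nat -> 'M[R]_(I, J)) :
  is_tree E ->
  (* parameters *)
  (forall n i, (0 < n)%N -> 0 < lamn n i) ->
  (forall n i j, (0 < n)%N -> (i, j) \in E -> 0 < mun n i j) ->
  (forall i, 0 < lam i) -> (forall j, 0 < nu j) ->
  (forall i j, (i, j) \in E -> 0 < mu i j) ->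
  (forall i, (fun n : nat => lamn n i / n%:R) @ \oo --> lam i) ->
  (forall j, (fun n : nat => (Nn n j)%:R / n%:R) @ \oo --> nu j) ->
  (forall i j, (i, j) \in E -> (fun n : nat => mun n i j) @ \oo --> mu i j) ->
  (forall i, (fun n : nat => (lamn n i - n%:R * lam i) / Num.sqrt n%:R) @ \oo --> hlam i) ->
  (forall i j, (i, j) \in E ->
     (fun n : nat => Num.sqrt n%:R * (mun n i j - mu i j)) @ \oo --> hmu i j) ->
  (forall j, (fun n : nat => Num.sqrt n%:R * ((Nn n j)%:R / n%:R - nu j)) @ \oo --> hnu j) ->
  (* complete resource pooling *)
  crp_unique_solution E lam mu nu xis ->
  (forall j, \sum_i xis i j = 1) ->
  (forall i j, (i, j) \in E -> 0 < xis i j) ->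
  (* the fixed edge and the associated matrices *)
  (ih, jh) \in E ->
  is_B_matrices E jh mu B1 B2 ->
  (forall n, (0 < n)%N -> is_B_matrices E jh (mun n) (B1n n) (B2n n)) ->
  let zs := fun i j => xis i j * nu j in
  let theta := fun j => hnu j + \sum_(i | (i, j) \in E) (hmu i j / mu i j) * zs i j in
  let h := fun i => hlam i -
       \sum_(j | (i, j) \in E) (mu i j * xis i j * hnu j + hmu i j * zs i j) in
  let hlamn := fun n i => (lamn n i - n%:R * lam i) / Num.sqrt n%:R in
  let hmun := fun n i j => Num.sqrt n%:R * (mun n i j - mu i j) in
  let hnun := fun n j => Num.sqrt n%:R * ((Nn n j)%:R / n%:R - nu j) in
  let thetan := fun n j => hnun n j +
       \sum_(i | (i, j) \in E) (hmun n i j / mun n i j) * zs i j in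
  let hn := fun n i => (Num.sqrt n%:R)^-1 *
       (lamn n i - \sum_(j | (i, j) \in E) mun n i j * xis i j * (Nn n j)%:R) in
  B1 \in unitmx /\ (forall n, (0 < n)%N -> B1n n \in unitmx) /\
  forall p : 'I_I -> R, (forall i, 0 < p i) -> \sum_i p i = 1 ->
    swss_value E hlam mu theta p (swss_formula B1 h p) /\
    (forall n, (0 < n)%N ->
       swss_value E (hlamn n) (mun n) (thetan n) p (swss_formula (B1n n) (hn n) p)).
Proof.
move=> [connE _] _ mun_pos _ _ mu_pos _ _ _ _ _ _ crp xis_sum _ _ HB HBn.
move=> zs theta h hlamn hmun hnun thetan hn.
have [[[xisE [_ xis_lam]] _] _] := crp.
have xis_col j : \sum_(i | (i, j) \in E) xis i j = 1.
  by rewrite sum_col_edges ?xis_sum // => i ijE; rewrite xisE.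
have mun_pos_n n : (0 < n)%N -> forall i j, (i, j) \in E -> 0 < mun n i j.
  by move=> n0 i j; exact: mun_pos.
have [kappa0 kappa0_routing] :
    exists kappa0, routing E mu theta (fun i => hlam i - h i) kappa0.
  exact: (limit_routing xis_col mu_pos).
have scaled n : (0 < n)%N -> exists kappa,
    routing E (mun n) (thetan n) (fun i => hlamn n i - hn n i) kappa.
  by move=> n0; exact: (scaled_routing xis_col n0 (mun_pos_n n n0) xis_lam).
split; first exact: (B1_unit connE mu_pos HB).
split=> [n n0|p p_pos _]; first exact: (B1_unit connE (mun_pos_n n n0) (HBn n n0)).
split; first exact: (swss_formula_value connE mu_pos HB ih p_pos kappa0_routing).
move=> n n0; have [kappa kappa_routing] := scaled n n0.
exact: (swss_formula_value connE (mun_pos_n n n0) (HBn n n0) ih p_pos kappa_routing).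
Qed.
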